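(* If $G$ is a countably infinite HH-homogeneous graph satisfying property $(\dagger)$, then $G$ is HE-homogeneous.
   Context: All graphs are undirected and loopless; subgraphs are induced. A homomorphism maps adjacent vertices to adjacent vertices. $G$ is HH-homogeneous (resp. HE-homogeneous) if every homomorphism between finite induced subgraphs of $G$ is the restriction of an endomorphism (resp. a surjective endomorphism) of $G$. $G$ has property $(\dagger)$ if for every surjective homomorphism $f:A\to B$ between finite induced subgraphs $A,B$ of $G$ and every vertex $b\notin B$, there exists a vertex $a\notin A$ such that $f\cup\{(a,b)\}$ is a homomorphism from $A\cup\{a\}$ to $B\cup\{b\}$. *)

(* Finite (induced) subgraphs are given by finite vertex lists; a map between
   finite induced subgraphs is represented by a total function V -> V of which
   only the values on the domain matter. *)
From Stdlib Require Import List.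
Import ListNotations.

Section Graphs.
Context {V : Type} (E : V -> V -> Prop).

Definition simple_graph : Prop :=
  (forall x y, E x y -> E y x) /\ (forall x, ~ E x x).

Definition countably_infinite (T : Type) : Prop :=
  exists e : nat -> T, (forall m n, e m = e n -> m = n) /\ (forall x, exists n, e n = x).

Definition hom_between (A B : list V) (f : V -> V) : Prop :=
  (forall x, In x A -> In (f x) B) /\
  (forall x y, In x A -> In y A -> E x y -> E (f x) (f y)).

Definition onto_between (A B : list V) (f : V -> V) : Prop :=
  forall y, In y B -> exists x, In x A /\ f x = y.

Definition endomorphism (g : V -> V) : Prop :=
  forall x y, E x y -> E (g x) (g y).

Definition surjective_fun (g : V -> V) : Prop :=
  forall y, exists x, g x = y.

Definition HH_homogeneous : Prop :=
  forall (A B : list V) (f : V -> V), hom_between A B f ->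
    exists g, endomorphism g /\ forall x, In x A -> g x = f x.

Definition HE_homogeneous : Prop :=
  forall (A B : list V) (f : V -> V), hom_between A B f ->
    exists g, endomorphism g /\ surjective_fun g /\ forall x, In x A -> g x = f x.

(* Property (dagger): f ∪ {(a,b)} is a homomorphism from A ∪ {a} to B ∪ {b}.
   Since a ∉ A, f ∪ {(a,b)} is a well-defined map; we express it as a map h
   agreeing with f on A and sending a to b. *)
Definition dagger : Prop :=
  forall (A B : list V) (f : V -> V),
    hom_between A B f -> onto_between A B f ->
    forall b, ~ In b B ->
      exists a, ~ In a A /\
        (exists h : V -> V, h a = b /\ (forall x, In x A -> h x = f x) /\
          hom_between (a :: A) (b :: B) h).
End Graphs.

(* Surjective homomorphisms between finite induced subgraphs
   can be extended in two directions: HH-homogeneity puts any vertex into the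
   domain, property (dagger) puts any vertex into the codomain while keeping
   surjectivity.  Enumerating V and alternating the two extensions produces an
   increasing chain whose domains and codomains both exhaust V; its union is a
   surjective endomorphism extending the given homomorphism. *)
From Stdlib Require Import List ClassicalEpsilon Classical Lia.

Section BackAndForth.
Context {V : Type} {E : V -> V -> Prop}.

Record fin_epi := FinEpi {
  dom : list V;
  cod : list V;
  fun_of : V -> V;
  fin_epi_hom : hom_between E dom cod fun_of;
  fin_epi_onto : onto_between dom cod fun_of }.

Definition extends (s t : fin_epi) : Prop :=
  incl (dom s) (dom t) /\ forall x, In x (dom s) -> fun_of t x = fun_of s x.

Lemma extends_refl (s : fin_epi) : extends s s.
Proof. split; [apply incl_refl | reflexivity]. Qed.

Lemma extends_trans (s t u : fin_epi) : extends s t -> extends t u -> extends s u.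
Proof.
  intros [Hst Hfst] [Htu Hftu]; split; [exact (incl_tran Hst Htu) |].
  intros x Hx; rewrite Hftu by auto; auto.
Qed.

Lemma hom_between_image (A B : list V) (f : V -> V) :
  hom_between E A B f -> hom_between E A (map f A) f.
Proof. intros [_ Hedge]; split; [intros x Hx; apply in_map |]; auto. Qed.

Lemma onto_between_image (A : list V) (f : V -> V) : onto_between A (map f A) f.
Proof. intros y Hy; apply in_map_iff in Hy as [x [Hfx Hx]]; eauto. Qed.

Lemma onto_between_cons (A B : list V) (f h : V -> V) (a : V) :
  onto_between A B f -> (forall x, In x A -> h x = f x) ->
  onto_between (a :: A) (h a :: B) h.
Proof.
  intros Honto Hhf y [<- | Hy]; [exists a; split; [left |]; auto |].
  destruct (Honto y Hy) as [x [Hx <-]]; exists x; split; [right |]; auto.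
Qed.

Lemma extend_dom (HH : HH_homogeneous E) (s : fin_epi) (v : V) :
  exists t, extends s t /\ In v (dom t).
Proof.
  destruct s as [A B f [Hmaps Hedge] Honto].
  destruct (HH A B f (conj Hmaps Hedge)) as [g [Hg Hgf]].
  assert (Hhom : hom_between E (v :: A) (g v :: B) g).
  { split; [intros x [<- | Hx]; [left | right; rewrite Hgf] |]; auto. }
  exists (FinEpi (v :: A) (g v :: B) g Hhom (onto_between_cons A B f g v Honto Hgf)).
  split; [split; [intros x; right | exact Hgf] | left]; auto.
Qed.

Lemma extend_cod (D : dagger E) (s : fin_epi) (v : V) :
  exists t, extends s t /\ In v (cod t).
Proof.
  destruct (classic (In v (cod s))) as [Hin | Hnin].
  { exists s; split; [apply extends_refl | exact Hin]. }
  destruct s as [A B f Hhom Honto]; simpl in Hnin.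
  destruct (D A B f Hhom Honto v Hnin) as [a [_ [h [<- [Hhf Hhom']]]]].
  exists (FinEpi (a :: A) (h a :: B) h Hhom' (onto_between_cons A B f h a Honto Hhf)).
  split; [split; [intros x; right | exact Hhf] | left]; auto.
Qed.

Lemma extend_dom_cod (HH : HH_homogeneous E) (D : dagger E) (s : fin_epi) (v : V) :
  exists t, extends s t /\ In v (dom t) /\ In v (cod t).
Proof.
  destruct (extend_dom HH s v) as [t [Hst Hv]].
  destruct (extend_cod D t v) as [u [Htu Hv']].
  exists u; split; [exact (extends_trans s t u Hst Htu) | split; [apply (proj1 Htu) |]; auto].
Qed.

Section ChainLimit.
Variable chain : nat -> fin_epi.
Hypothesis chain_succ : forall n, extends (chain n) (chain (S n)).
Variable stage : V -> nat.
Hypothesis stage_dom : forall x, In x (dom (chain (stage x))).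
Hypothesis stage_cod : forall x, In x (cod (chain (stage x))).

Lemma chain_extends (m n : nat) : m <= n -> extends (chain m) (chain n).
Proof.
  induction 1; [apply extends_refl |].
  exact (extends_trans _ _ _ IHle (chain_succ m0)).
Qed.

Definition chain_limit (x : V) : V := fun_of (chain (stage x)) x.

Lemma chain_limit_agrees (n : nat) (x : V) :
  In x (dom (chain n)) -> chain_limit x = fun_of (chain n) x.
Proof.
  intros Hx; unfold chain_limit.
  destruct (chain_extends n (max n (stage x)) ltac:(lia)) as [_ Hn].
  destruct (chain_extends (stage x) (max n (stage x)) ltac:(lia)) as [_ Hsx].
  rewrite <- Hsx, Hn by auto; reflexivity.
Qed.

Lemma chain_limit_endomorphism : endomorphism E chain_limit.
Proof.
  intros x y Hxy; set (p := max (stage x) (stage y)).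
  assert (Hx : In x (dom (chain p))).
  { apply (proj1 (chain_extends (stage x) p ltac:(lia))), stage_dom. }
  assert (Hy : In y (dom (chain p))).
  { apply (proj1 (chain_extends (stage y) p ltac:(lia))), stage_dom. }
  rewrite (chain_limit_agrees p x Hx), (chain_limit_agrees p y Hy).
  apply (proj2 (fin_epi_hom (chain p))); auto.
Qed.

Lemma chain_limit_surjective : surjective_fun chain_limit.
Proof.
  intros y; destruct (fin_epi_onto (chain (stage y)) y (stage_cod y)) as [x [Hx <-]].
  exists x; exact (chain_limit_agrees _ x Hx).
Qed.

End ChainLimit.

Lemma exists_exhausting_chain (HH : HH_homogeneous E) (D : dagger E)
  (enum : nat -> V) (s0 : fin_epi) :
  exists chain : nat -> fin_epi, chain 0 = s0 /\ forall n,
    extends (chain n) (chain (S n)) /\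
    In (enum n) (dom (chain (S n))) /\ In (enum n) (cod (chain (S n))).
Proof.
  destruct (choice (fun (ns : nat * fin_epi) t =>
              extends (snd ns) t /\ In (enum (fst ns)) (dom t) /\ In (enum (fst ns)) (cod t)))
    as [step Hstep].
  { intros [n s]; exact (extend_dom_cod HH D s (enum n)). }
  exists (fix chain n := match n with O => s0 | S k => step (k, chain k) end).
  split; [reflexivity | intros n; exact (Hstep (n, _))].
Qed.

End BackAndForth.

Theorem proposition4p4 (V : Type) (E : V -> V -> Prop) :
  simple_graph E -> countably_infinite V ->
  HH_homogeneous E -> dagger E -> HE_homogeneous E.
Proof.
  intros _ [enum [_ Henum]] HH D A B f Hf.
  set (s0 := FinEpi A (map f A) f (hom_between_image A B f Hf) (onto_between_image A f)).
  destruct (exists_exhausting_chain HH D enum s0) as [chain [Hchain0 Hchain]].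
  destruct (choice (fun x n => enum n = x) Henum) as [index Hindex].
  set (stage := fun x => S (index x)).
  assert (Hsucc : forall n, extends (chain n) (chain (S n))) by apply Hchain.
  assert (Hstage : forall x, In x (dom (chain (stage x))) /\ In x (cod (chain (stage x)))).
  { intros x; destruct (Hchain (index x)) as [_ Hx]; rewrite Hindex in Hx; exact Hx. }
  assert (Hdom : forall x, In x (dom (chain (stage x)))) by apply Hstage.
  assert (Hcod : forall x, In x (cod (chain (stage x)))) by apply Hstage.
  exists (chain_limit chain stage); split; [| split].
  - exact (chain_limit_endomorphism chain Hsucc stage Hdom).
  - exact (chain_limit_surjective chain Hsucc stage Hdom Hcod).
  - intros x Hx; rewrite (chain_limit_agrees chain Hsucc stage Hdom 0 x);
      rewrite Hchain0; [reflexivity | exact Hx].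
Qed.
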